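(* Let $W_T=S_{N+1}$ be the symmetric group with simple reflections $s_1,\dots,s_N$ indexed by $T=\{1<2<\dots<N\}$, let $I=\{1,\dots,N-1\}$, $J=\{2,\dots,N\}$, and for $X\subset T$ with $X=\{x_1>x_2>\dots>x_d\}$ let $h_X=s_{x_1}s_{x_2}\cdots s_{x_d}$. For any subset $X\subset T$ the following are equivalent: (i) $J\subset X$; (ii) $J\subset\mathcal R(w_Ih_X)$. Moreover, in this case: (1) $\ell(w_Ih_X)=\ell(w_I)+\ell(h_X)$; (2) $w_Ih_X=h_Yw_J$ for some uniquely determined $Y\subset T$; (3) $Y$ is the conjugation of $X$ by the longest element of $W_T$; (4) $\mathcal R(w_Ih_X)=X$; (5) $\mathcal L(h_Yw_J)=Y$.
   Context: For $K\subset T$, $w_K$ is the longest element of the parabolic subgroup $W_K$. $\mathcal L(w)$ and $\mathcal R(w)$ denote the left and right descent sets of $w$ (sets of simple reflections, identified with their indices). Conjugation by the longest element $w_T$ sends $s_i$ to $s_{N+1-i}$. *)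

(* W_T = S_{N+1} realized as {perm 'I_N.+1}.
   Simple reflections are indexed by k : 'I_N, where k stands for
   s_{k+1} (paper's index), i.e. the transposition of k and k+1. *)
From mathcomp Require Import all_boot all_order all_fingroup.
Set Implicit Arguments. Unset Strict Implicit. Unset Printing Implicit Defensive.
Local Open Scope group_scope.

Section Coxeter.
Variable N : nat.
Notation W := {perm 'I_N.+1}.

Definition sref (k : 'I_N) : W := tperm (widen_ord (leqnSn N) k) (lift ord0 k).

Definition word_of_len (w : W) (n : nat) : bool :=
  [exists t : n.-tuple 'I_N, (\prod_(i <- t) sref i) == w].

(* Coxeter length: the least n such that w is a product of n simple
   reflections (the search bound #|W| exceeds the maximal length). *)
Definition len (w : W) : nat :=
  find (word_of_len w) (iota 0 #|{: W}|.+1).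

Definition parab (K : {set 'I_N}) : {group W} := <<[set sref k | k in K]>>%G.
Definition wlong (K : {set 'I_N}) : W :=
  [arg max_(w > (1 : W) in parab K) len w].

Definition rdes (w : W) : {set 'I_N} := [set k | len (w * sref k) < len w].
Definition ldes (w : W) : {set 'I_N} := [set k | len (sref k * w) < len w].

Definition hX (X : {set 'I_N}) : W :=
  \prod_(x <- sort (fun a b : 'I_N => b <= a)%N (enum X)) sref x.

(* T = all indices, I = {1..N-1}, J = {2..N} (paper indexing) *)
Definition Tset : {set 'I_N} := [set: 'I_N].
Definition Iset : {set 'I_N} := [set k : 'I_N | k.+1 < N]%N.
Definition Jset : {set 'I_N} := [set k : 'I_N | 0 < k]%N.

Definition conjT (X : {set 'I_N}) : {set 'I_N} :=
  [set k | [exists x in X, sref k == sref x ^ wlong Tset]].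
End Coxeter.

(* Identify s_k with the transposition of the points k and k+1 of {0, ..., N}.
   The Coxeter length of w is then its number of inversions, and the left
   (right) descents of w are read off from the values of w (of w^-1) at
   consecutive points.  The longest element of the parabolic subgroup generated
   by an interval of reflections is the reversal of the matching interval of
   points, and h_X sends each x in X to x+1 and each other point below N to a
   point not above it.  Hence J ⊆ X forces X = T or X = J, and in these two
   cases w_I h_X is computed explicitly.  Length additivity is uniform: every
   inversion of w_I lies in {0, ..., N-1}, where h_X is increasing.  Conversely,
   if j is the largest element of J outside X, then w_I h_X sends N to j+1, so
   j is not a right descent. *)

From Pilot Require Import Defs.
From mathcomp Require Import all_boot all_order all_fingroup.
From mathcomp Require Import zify.
Set Implicit Arguments. Unset Strict Implicit. Unset Printing Implicit Defensive.
Local Open Scope group_scope.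

Section SymmetricGroup.
Variable N : nat.
Notation W := {perm 'I_N.+1}.
Notation sref := (@sref N).
Notation wI := (wlong (Iset N)).
Notation wJ := (wlong (Jset N)).
Notation wT := (wlong (Tset N)).

Ltac case_ifs := repeat match goal with
  | |- context [if ?c then _ else _] =>
      lazymatch c with
      | context [if _ then _ else _] => fail
      | _ => case: (boolP c) => ? /=
      end
  end.

(** * Simple reflections, inversions and length *)

Definition low (k : 'I_N) : 'I_N.+1 := widen_ord (leqnSn N) k.
Definition high (k : 'I_N) : 'I_N.+1 := lift ord0 k.

Lemma low_val k : low k = k :> nat. Proof. by []. Qed.
Lemma high_val k : high k = k.+1 :> nat. Proof. by rewrite /= /bump leq0n. Qed.

Lemma lowK (x : 'I_N.+1) (lt_xN : x < N) : low (Ordinal lt_xN) = x.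
Proof. exact: val_inj. Qed.

Lemma low_inord i (lt_iN : i < N) : low (Ordinal lt_iN) = inord i.
Proof. by apply: val_inj; rewrite /= inordK //; lia. Qed.

Lemma high_inord i (lt_iN : i < N) : high (Ordinal lt_iN) = inord i.+1.
Proof. by apply: val_inj; rewrite /= inordK /bump //; lia. Qed.

Lemma sref_low k : sref k (low k) = high k. Proof. exact: tpermL. Qed.
Lemma sref_high k : sref k (high k) = low k. Proof. exact: tpermR. Qed.
Lemma srefV k : (sref k)^-1 = sref k. Proof. exact: tpermV. Qed.
Lemma sref2 k : sref k * sref k = 1. Proof. exact: tperm2. Qed.

Lemma sref_val k x : sref k x =
  (if (x : nat) == k then k.+1 else if (x : nat) == k.+1 then k : nat else x) :> nat.
Proof.
rewrite /Defs.sref -/(low k) -/(high k).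
case: tpermP => [->|->|/eqP + /eqP]; rewrite ?low_val ?high_val ?eqxx //.
  by case: eqP => //; lia.
by move=> ? ?; rewrite !ifN.
Qed.

Lemma sref_fix (k : 'I_N) (x : 'I_N.+1) :
  (x : nat) != k -> (x : nat) != k.+1 -> sref k x = x.
Proof. by move=> ? ?; apply: ord_inj; rewrite sref_val !ifN. Qed.

Lemma sref_inj : injective sref.
Proof.
move=> k l /(congr1 (fun s : W => s (low k))); rewrite sref_low.
move=> /(congr1 (@nat_of_ord _)); rewrite high_val sref_val low_val.
apply: contra_eq => k_ne_l; apply/eqP.
by case: ifP => /eqP; [move/ord_inj/eqP; rewrite (negbTE k_ne_l) | case: ifP => /eqP]; lia.
Qed.

Lemma sref_ltn k (i j : 'I_N.+1) :
  ((i, j) != (low k, high k)) && (i < j)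
  = ((sref k i, sref k j) != (low k, high k)) && (sref k i < sref k j).
Proof.
rewrite !xpair_eqE -!val_eqE /= !sref_val /bump leq0n add1n.
by repeat case: ifP => [/eqP|/negbT/eqP] ?; lia.
Qed.

Lemma perm_low_high_neq (w : W) k : (w (low k) : nat) != w (high k).
Proof. by apply/negP => /eqP/ord_inj/perm_inj/(congr1 val) /=; rewrite /bump; lia. Qed.

Definition inversions (w : W) : {set 'I_N.+1 * 'I_N.+1} :=
  [set p : 'I_N.+1 * 'I_N.+1 | (p.1 < p.2) && (w p.2 < w p.1)].

Definition ninv (w : W) : nat := #|inversions w|.

Lemma ninv_mulsl k (w : W) :
  ninv (sref k * w) = if w (low k) < w (high k) then (ninv w).+1 else (ninv w).-1.
Proof.
pose e := (low k, high k); pose swap p := (sref k p.1, sref k p.2).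
have swap_inj : injective swap by move=> [a b] [c d] [/perm_inj-> /perm_inj->].
have inv_swap : inversions (sref k * w) :\ e = swap @^-1: (inversions w :\ e).
  by apply/setP => -[i j]; rewrite !inE /= !permM andbA sref_ltn -andbA.
rewrite /ninv (cardsD1 e) (cardsD1 e (inversions w)) inv_swap card_preimset //.
rewrite !inE /= !permM sref_low sref_high /bump leq0n add1n ltnSn /=.
by have := perm_low_high_neq w k; case: ltngtP.
Qed.

Lemma ninvV (w : W) : ninv w^-1 = ninv w.
Proof.
suff le_ninvV v : ninv v <= ninv v^-1.
  by apply/anti_leq/andP; split; [rewrite -{2}(invgK w) |]; exact: le_ninvV.
pose flip p := (v p.2, v p.1).
have flip_inj : injective flip by move=> [a b] [c d] [/perm_inj-> /perm_inj->].
rewrite /ninv -(card_imset _ flip_inj); apply/subset_leq_card/subsetP => q.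
by case/imsetP=> -[i j]; rewrite !inE /= => /andP[lt_ij lt_v] ->; rewrite !permK lt_v.
Qed.

Lemma ninv_mulsr k (w : W) : ninv (w * sref k) =
  if w^-1 (low k) < w^-1 (high k) then (ninv w).+1 else (ninv w).-1.
Proof. by rewrite -ninvV invMg srefV ninv_mulsl ninvV. Qed.

Lemma ninv_mul (u v : W) : inversions u \subset inversions (u * v) ->
  ninv (u * v) = ninv u + ninv v.
Proof.
move=> sub_uv; pose img p := (u p.1, u p.2).
have img_inj : injective img by move=> [a b] [c d] [/perm_inj-> /perm_inj->].
have inv_uv : inversions (u * v) :\: inversions u = img @^-1: inversions v.
  apply/setP => -[i j]; rewrite !inE /= !permM.
  case: (ltngtP (u i) (u j)) => [lt_u|lt_u|/ord_inj/perm_inj->]; rewrite ?ltnn ?andbF //=.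
    case: (ltngtP i j) => [//|lt_ji|/ord_inj eq_ij]; last by rewrite eq_ij ltnn in lt_u.
    apply/esym/negbTE; have := subsetP sub_uv (j, i).
    by rewrite !inE /= lt_ji lt_u !permM => /(_ isT)/ltnW; rewrite leqNgt.
  by case: (i < j).
by rewrite /ninv -(cardsID (inversions u)) (setIidPr sub_uv) inv_uv card_preimset.
Qed.

Lemma decreasing_interval_rev (g : nat -> nat) a b :
  (forall i, a <= i <= b -> a <= g i <= b) ->
  (forall i, a <= i < b -> g i.+1 < g i) ->
  forall i, a <= i <= b -> g i = a + b - i.
Proof.
move=> g_in g_dec i /andP[le_ai le_ib].
have lb d : d <= b - a -> a + d <= g (b - d).
  elim: d => [|d IHd] le_d; first by have := g_in b; rewrite subn0; lia.
  have := g_dec (b - d.+1); have := IHd (ltnW le_d).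
  have -> : (b - d.+1).+1 = b - d by lia.
  lia.
have ub d : d <= b - a -> g (a + d) <= b - d.
  elim: d => [|d IHd] le_d; first by have := g_in a; rewrite addn0; lia.
  by have := g_dec (a + d); have := IHd (ltnW le_d); rewrite addnS; lia.
by have := lb (b - i); have := ub (i - a); rewrite subKn // subnKC //; lia.
Qed.

Lemma no_descent_eq1 (w : W) : (forall k, w (low k) < w (high k)) -> w = 1.
Proof.
move=> asc; pose g i := N - w (inord i).
have g_rev : forall i, 0 <= i <= N -> g i = 0 + N - i.
  apply: decreasing_interval_rev => i /andP[_ le_iN]; first by rewrite /g; lia.
  have lt_iN : i < N by lia.
  have := asc (Ordinal lt_iN); rewrite low_inord high_inord /g.
  by have := ltn_ord (w (inord i.+1)); lia.
apply/permP => x; apply: val_inj; rewrite perm1 /=.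
by have := g_rev x; rewrite /g inord_val; have := ltn_ord x; have := ltn_ord (w x); lia.
Qed.

Lemma descent_exists (w : W) : w != 1 -> exists k, w (high k) < w (low k).
Proof.
move=> w_ne1; case: (pickP (fun k => w (high k) < w (low k))) => [k desc|no_desc].
  by exists k.
case/eqP: w_ne1; apply: no_descent_eq1 => k.
by have := no_desc k; have := perm_low_high_neq w k; rewrite /=; lia.
Qed.

Lemma ninv_eq0 (w : W) : (ninv w == 0) = (w == 1).
Proof.
apply/idP/idP => [|/eqP->].
  apply: contraLR => /descent_exists[k desc]; rewrite cards_eq0; apply/set0Pn.
  by exists (low k, high k); rewrite inE /= desc /bump; lia.
by rewrite cards_eq0; apply/eqP/setP => p; rewrite !inE !perm1; case: ltngtP.
Qed.

Lemma ninv_descent (w : W) : w != 1 -> exists k, ninv (sref k * w) = (ninv w).-1.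
Proof.
by case/descent_exists=> k desc; exists k; rewrite ninv_mulsl ltnNge (ltnW desc).
Qed.

Lemma word_ninv (w : W) : word_of_len w (ninv w).
Proof.
suff word_n n v : ninv v = n -> word_of_len v n by exact: word_n.
elim: n v => [|n IHn] v ninv_v.
  have -> : v = 1 by apply/eqP; rewrite -ninv_eq0 ninv_v.
  by apply/existsP; exists [tuple]; rewrite big_nil.
have [k ninv_kv] : exists k, ninv (sref k * v) = n.
  by rewrite -[n]/n.+1.-1 -ninv_v; apply: ninv_descent; rewrite -ninv_eq0 ninv_v.
have /existsP[t /eqP prod_t] := IHn _ ninv_kv.
apply/existsP; exists [tuple of k :: t].
by rewrite big_cons prod_t mulgA sref2 mul1g.
Qed.

Lemma ninv_prod_le (l : seq 'I_N) : ninv (\prod_(k <- l) sref k) <= size l.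
Proof.
elim: l => [|k l IHl]; first by rewrite big_nil (eqP (_ : ninv 1 == 0)) ?ninv_eq0.
by rewrite big_cons ninv_mulsl; case: ifP => _; [|apply: leq_trans (leq_pred _) (leqW _)].
Qed.

Lemma ninv_le_word (w : W) n : word_of_len w n -> ninv w <= n.
Proof. by case/existsP=> t /eqP <-; rewrite -{2}(size_tuple t) ninv_prod_le. Qed.

Lemma ninv_lt_card (w : W) : ninv w < #|{: W}|.
Proof.
have attained n v : ninv v = n -> forall i, i <= n -> i \in map ninv (enum {: W}).
  elim: n v => [|n IHn] v ninv_v i le_in.
    by apply/mapP; exists v; rewrite ?mem_enum //; lia.
  case: (ltngtP i n.+1) => [lt_in | |->]; [|lia|by apply/mapP; exists v; rewrite ?mem_enum].
  have v_ne1 : v != 1 by rewrite -ninv_eq0 ninv_v.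
  have [k ninv_kv] := ninv_descent v_ne1.
  by apply: (IHn (sref k * v)); rewrite ?ninv_kv ?ninv_v.
rewrite cardE -(size_map ninv) -(size_iota 0 (ninv w).+1).
apply: uniq_leq_size (iota_uniq _ _) _ => i; rewrite mem_iota add0n ltnS.
exact: attained.
Qed.

Lemma lenE (w : W) : len w = ninv w.
Proof.
have le_card : ninv w <= #|{: W}|.+1 by have := ninv_lt_card w; lia.
rewrite /len -(subnKC le_card) iotaD find_cat size_iota.
have -> : has (word_of_len w) (iota 0 (ninv w)) = false.
  apply/hasPn => i; rewrite mem_iota add0n => /andP[_ lt_i].
  by apply/negP => /ninv_le_word; lia.
rewrite add0n subSn ?(ltnW (ninv_lt_card w)) //.
have find_head s : find (word_of_len w) (ninv w :: s) = 0.
  by rewrite -[find _ _]/(if word_of_len w (ninv w) then 0 else _) word_ninv.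
by rewrite find_head addn0.
Qed.

Lemma ninv_mulsl_lt k (w : W) :
  (ninv (sref k * w) < ninv w) = (w (high k) < w (low k)).
Proof.
rewrite ninv_mulsl; have := perm_low_high_neq w k.
case: (ltngtP (w (low k)) (w (high k))) => // desc _; first by rewrite ltnNge leqnSn.
rewrite ltn_predL; apply/card_gt0P; exists (low k, high k).
by rewrite inE /= desc /bump; lia.
Qed.

Lemma ldesE (w : W) k : (k \in ldes w) = (w (high k) < w (low k)).
Proof. by rewrite inE !lenE ninv_mulsl_lt. Qed.

Lemma rdesE (w : W) k : (k \in rdes w) = (w^-1 (high k) < w^-1 (low k)).
Proof. by rewrite inE !lenE -ninvV invMg srefV -(ninvV w) ninv_mulsl_lt. Qed.

Lemma rdes_preim (w : W) (k : 'I_N) : exists p q : 'I_N.+1,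
  [/\ w p = k :> nat, w q = k.+1 :> nat & (k \in rdes w) = (q < p)].
Proof.
by exists (w^-1 (low k)), (w^-1 (high k)); rewrite !permKV low_val high_val rdesE.
Qed.

(** * Longest elements of parabolic subgroups generated by intervals *)

Section LongestElement.
Variables (a b : nat) (K : {set 'I_N}).
Hypotheses (le_bN : b <= N) (K_interval : K = [set k : 'I_N | a <= k < b]).

Lemma parab_fix (v : W) : v \in parab K ->
  forall x : 'I_N.+1, ~~ (a <= x <= b) -> v x = x.
Proof.
move=> /gen_prodgP[n [c c_sref ->]] x x_out.
apply: (big_ind (fun u : W => u x = x)) => [|u1 u2 u1x u2x|i _]; first exact: perm1.
  by rewrite permM u1x u2x.
have /imsetP[k + ->] := c_sref i; rewrite K_interval inE => /andP[le_ak lt_kb].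
by rewrite sref_fix //; lia.
Qed.

Lemma parab_stable (v : W) : v \in parab K ->
  forall x : 'I_N.+1, a <= x <= b -> a <= v x <= b.
Proof.
move=> vK x x_in; apply/negPn/negP => vx_out.
by move: vx_out (parab_fix vK vx_out) => + /perm_inj vx_x; rewrite vx_x x_in.
Qed.

Lemma wlong_max :
  wlong K \in parab K /\ forall v, v \in parab K -> len v <= len (wlong K).
Proof. by rewrite /wlong; case: arg_maxnP => [|v]; first exact: group1. Qed.

Lemma wlongV_descent k : k \in K -> (wlong K)^-1 (high k) < (wlong K)^-1 (low k).
Proof.
move=> kK; have [wK w_max] := wlong_max.
have := w_max _ (groupM wK (mem_gen (imset_f sref kK))); rewrite !lenE ninv_mulsr.
have := perm_low_high_neq (wlong K)^-1 k.
by case: (ltngtP ((wlong K)^-1 (low k)) ((wlong K)^-1 (high k))) => //; lia.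
Qed.

Lemma wlong_interval (x : 'I_N.+1) :
  wlong K x = (if a <= x <= b then a + b - x else x) :> nat.
Proof.
have [wK _] := wlong_max.
pose g i := nat_of_ord ((wlong K)^-1 (inord i)).
have g_rev : forall i, a <= i <= b -> g i = a + b - i.
  apply: decreasing_interval_rev => i i_in.
    by rewrite /g; apply: parab_stable; rewrite ?groupV ?inordK //; lia.
  have lt_iN : i < N by lia.
  rewrite /g -(low_inord lt_iN) -(high_inord lt_iN).
  by apply: wlongV_descent; rewrite K_interval inE.
case: ifP => x_in; last by rewrite parab_fix ?x_in.
have := g_rev _ (parab_stable wK x_in); rewrite /g inord_val permK.
by have := parab_stable wK x_in; lia.
Qed.

End LongestElement.

Lemma wI_val (x : 'I_N.+1) : wI x = (if x < N then N.-1 - x else x) :> nat.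
Proof.
rewrite (@wlong_interval 0 N.-1) ?leq_pred //.
  by have := ltn_ord x; case: ifP; case: ifP; lia.
by apply/setP => k; rewrite !inE; apply/idP/idP; have := ltn_ord k; lia.
Qed.

Lemma wJ_val (x : 'I_N.+1) : wJ x = (if 0 < x then N.+1 - x else 0) :> nat.
Proof.
rewrite (@wlong_interval 1 N) //.
  by have := ltn_ord x; case: ifP; case: ifP; lia.
by apply/setP => k; rewrite !inE; apply/idP/idP; have := ltn_ord k; lia.
Qed.

Lemma wT_val (x : 'I_N.+1) : wT x = N - x :> nat.
Proof.
rewrite (@wlong_interval 0 N) //; first by have := ltn_ord x; case: ifP; lia.
by apply/setP => k; rewrite !inE; have := ltn_ord k; lia.
Qed.

(** * The elements h_X *)

Notation decreasing l := (sorted (fun i j : 'I_N => j < i) l).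

Definition prod_sref (l : seq 'I_N) : W := \prod_(k <- l) sref k.

Lemma prod_sref_cons (k : 'I_N) (l : seq 'I_N) (x : 'I_N.+1) :
  prod_sref (k :: l) x = prod_sref l (sref k x).
Proof. by rewrite /prod_sref big_cons permM. Qed.

Lemma prod_sref_fix (l : seq 'I_N) (x : 'I_N.+1) :
  (forall k, k \in l -> k.+1 < x) -> prod_sref l x = x.
Proof.
elim: l => [|k l IHl] lt_lx; first by rewrite /prod_sref big_nil perm1.
have lt_kx := lt_lx k (mem_head _ _).
rewrite prod_sref_cons sref_fix; [|lia|lia].
by apply: IHl => i il; apply: lt_lx; rewrite inE il orbT.
Qed.

Lemma decreasing_cons (k : 'I_N) (l : seq 'I_N) :
  decreasing (k :: l) -> decreasing l /\ forall i, i \in l -> i < k.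
Proof.
rewrite /= path_sortedE => [/andP[/allP lt_l ->] //|i j m lt_ji lt_mj].
exact: ltn_trans lt_mj lt_ji.
Qed.

Lemma prod_sref_low (l : seq 'I_N) (k : 'I_N) :
  decreasing l -> k \in l -> prod_sref l (low k) = high k.
Proof.
elim: l => [//|j l IHl] /decreasing_cons[dec_l lt_l]; rewrite inE prod_sref_cons.
case/predU1P=> [->|kl].
  by rewrite sref_low prod_sref_fix // => i /lt_l; rewrite high_val.
by have lt_kj := lt_l _ kl; rewrite sref_fix ?IHl //=; lia.
Qed.

Lemma prod_sref_le (l : seq 'I_N) (k : 'I_N) :
  decreasing l -> k \notin l -> prod_sref l (low k) <= k.
Proof.
elim: l k => [|j l IHl] k; first by rewrite /prod_sref big_nil perm1.
move=> /decreasing_cons[dec_l lt_l]; rewrite inE negb_or prod_sref_cons.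
move=> /andP[k_ne_j kl]; have [k_eq|k_ne] := eqVneq (k : nat) j.+1.
  have -> : low k = high j by apply: val_inj; rewrite /= k_eq /bump; lia.
  have jl : j \notin l by apply/negP => /lt_l; rewrite ltnn.
  by rewrite sref_high; have := IHl j dec_l jl; lia.
have k_ne_j' : (k : nat) != j by apply: contra k_ne_j => /eqP/ord_inj->.
by rewrite sref_fix ?IHl.
Qed.

Lemma sort_enum_decreasing (X : {set 'I_N}) :
  decreasing (sort (fun i j : 'I_N => j <= i) (enum X)).
Proof.
have := gtn_sorted_uniq_geq [seq val i | i <- sort (fun i j : 'I_N => j <= i) (enum X)].
rewrite !sorted_map map_inj_uniq ?sort_uniq ?enum_uniq ?sort_sorted //=.
exact: ord_inj.
Qed.

Lemma hX_low (X : {set 'I_N}) (k : 'I_N) : k \in X -> hX X (low k) = high k.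
Proof.
by move=> kX; apply: prod_sref_low (sort_enum_decreasing X) _; rewrite mem_sort mem_enum.
Qed.

Lemma hX_le (X : {set 'I_N}) (k : 'I_N) : k \notin X -> hX X (low k) <= k.
Proof.
by move=> kX; apply: prod_sref_le (sort_enum_decreasing X) _; rewrite mem_sort mem_enum.
Qed.

Lemma hX_le_succ (X : {set 'I_N}) (k : 'I_N) : hX X (low k) <= k.+1.
Proof. by case: (boolP (k \in X)) => [/hX_low->|/hX_le]; rewrite ?high_val //; lia. Qed.

Lemma hX_succ (X : {set 'I_N}) (x : 'I_N.+1) (lt_xN : x < N) :
  Ordinal lt_xN \in X -> hX X x = x.+1 :> nat.
Proof. by move=> /hX_low; rewrite lowK => ->; rewrite high_val. Qed.

Lemma hX_inj : injective (@hX N).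
Proof.
move=> X Y eq_hX; apply/setP => k.
suff memE (Z : {set 'I_N}) : (k \in Z) = (hX Z (low k) == high k).
  by rewrite !memE eq_hX.
case: (boolP (k \in Z)) => [/hX_low->|/hX_le le_k]; first by rewrite eqxx.
by apply/esym/negbTE; apply/eqP => /(congr1 (@nat_of_ord _)); rewrite high_val; lia.
Qed.

(* The preimage of j+1 can be neither in X (it would be j) nor a point of
   {0, ..., N-1} outside X (it would exceed j), so it is N. *)
Lemma hX_ord_max (X : {set 'I_N}) (j : 'I_N) :
  j \notin X -> (forall k : 'I_N, j < k -> k \in X) -> hX X ord_max = high j.
Proof.
move=> jX above_j; set y := (hX X)^-1 (high j).
have hX_y : hX X y = high j by rewrite permKV.
suff -> : ord_max = y by [].
case: (ltnP y N) => [lt_yN|le_Ny]; last by apply: val_inj => /=; have := ltn_ord y; lia.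
rewrite -(lowK lt_yN) in hX_y; case: (boolP (Ordinal lt_yN \in X)) => yX.
  move: hX_y; rewrite hX_low // => /(congr1 (@nat_of_ord _)); rewrite !high_val => -[y_j].
  by move: jX; rewrite (_ : j = Ordinal lt_yN) ?yX //; apply: val_inj.
by move: (hX_le yX); rewrite hX_y high_val => /above_j; rewrite (negbTE yX).
Qed.

Lemma hX_ltn (X : {set 'I_N}) (y z : 'I_N.+1) :
  Jset N \subset X -> y < z < N -> hX X y < hX X z.
Proof.
move=> JX /andP[lt_yz lt_zN]; have lt_yN : y < N by lia.
rewrite (hX_succ (lt_xN := lt_zN)); last by apply: (subsetP JX); rewrite inE /=; lia.
by have := hX_le_succ X (Ordinal lt_yN); rewrite lowK /=; lia.
Qed.

Lemma len_wI_hX (X : {set 'I_N}) :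
  Jset N \subset X -> len (wI * hX X) = len wI + len (hX X).
Proof.
move=> JX; rewrite !lenE; apply: ninv_mul; apply/subsetP => -[i j].
rewrite !inE /= !permM => /andP[lt_ij lt_wI]; rewrite lt_ij /=.
by apply: hX_ltn => //; move: lt_wI; rewrite !wI_val; have := ltn_ord j; case_ifs; lia.
Qed.

Lemma Jset_subset_of_rdes (X : {set 'I_N}) :
  Jset N \subset rdes (wI * hX X) -> Jset N \subset X.
Proof.
move=> J_rdes; apply/subsetP => j0 j0J; apply/negPn/negP => j0X.
have [j /andP[jJ jX] j_max] := @arg_maxnP _ j0 (fun j => (j \in Jset N) && (j \notin X))
  (fun j : 'I_N => nat_of_ord j) (introT andP (conj j0J j0X)).
have hX_max : hX X ord_max = high j.
  apply: hX_ord_max jX _ => k lt_jk; apply/negPn/negP => kX.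
  by have := j_max k; rewrite kX andbT inE; move: jJ; rewrite inE; lia.
have wI_max : wI ord_max = ord_max by apply: ord_inj; rewrite wI_val ltnn.
have w_max : (wI * hX X) ord_max = high j by rewrite permM wI_max.
have := subsetP J_rdes j jJ; rewrite rdesE -w_max permK.
by rewrite ltnNge -ltnS ltn_ord.
Qed.

(** * The cases X = T and X = J *)

Lemma sref_conj_wT (k : 'I_N) : sref k ^ wT = sref (rev_ord k).
Proof.
rewrite /Defs.sref tpermJ tpermC; congr tperm; apply: val_inj.
all: by rewrite /= wT_val /= /bump; have := ltn_ord k; lia.
Qed.

Lemma conjT_rev (X : {set 'I_N}) (k : 'I_N) : (k \in conjT X) = (rev_ord k \in X).
Proof.
rewrite inE; apply/existsP/idP => [[x /andP[xX /eqP]]|kX].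
  by rewrite sref_conj_wT => /sref_inj->; rewrite rev_ordK.
by exists (rev_ord k); rewrite kX sref_conj_wT rev_ordK eqxx.
Qed.

Lemma conjT_Tset : conjT (Tset N) = Tset N.
Proof. by apply/setP => k; rewrite conjT_rev !inE. Qed.

Lemma conjT_Jset : conjT (Jset N) = Iset N.
Proof. by apply/setP => k; rewrite conjT_rev !inE /=; have := ltn_ord k; lia. Qed.

Lemma Jset_subset_cases (X : {set 'I_N}) :
  Jset N \subset X -> X = Tset N \/ (X = Jset N /\ 0 < N).
Proof.
move=> JX; case: (boolP (Tset N \subset X)) => [TX|/subsetPn[k _ kX]].
  by left; apply/eqP; rewrite eqEsubset subsetT.
have k0 : k = 0 :> nat.
  apply/eqP; rewrite -leqn0 leqNgt; apply: contra kX => k_gt0.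
  by apply: (subsetP JX); rewrite inE.
right; split; last by have := ltn_ord k; lia.
apply/setP => x; rewrite [x \in Jset N]inE; have [x0|x_gt0] := posnP x.
  by rewrite (_ : x = k) ?(negbTE kX) //; apply: ord_inj; rewrite x0 k0.
by rewrite (subsetP JX) // inE.
Qed.

Lemma perm_eq_off (p q : W) x0 : (forall x, x != x0 -> p x = q x) -> p = q.
Proof.
move=> eq_off; apply/permP => x; have [->|] := eqVneq x x0; last exact: eq_off.
set y := p^-1 (q x0); have p_y : p y = q x0 by rewrite /y permKV.
have [y_x0|y_ne] := eqVneq y x0; first by rewrite -{1}y_x0.
by move: p_y; rewrite eq_off // => /perm_inj y_x0; rewrite y_x0 eqxx in y_ne.
Qed.

Lemma ltN_of_neq_max (x : 'I_N.+1) : x != ord_max -> x < N.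
Proof. by rewrite -val_eqE /=; have := ltn_ord x; lia. Qed.

Lemma wI_hT : wI * hX (Tset N) = wT.
Proof.
apply: (@perm_eq_off _ _ ord_max) => x /ltN_of_neq_max lt_xN; apply: ord_inj.
have lt_wN : wI x < N by rewrite wI_val lt_xN; lia.
by rewrite permM (hX_succ (lt_xN := lt_wN)) ?inE // wI_val wT_val lt_xN; lia.
Qed.

Lemma hT_wJ : hX (Tset N) * wJ = wT.
Proof.
apply: (@perm_eq_off _ _ ord_max) => x /ltN_of_neq_max lt_xN; apply: ord_inj.
by rewrite permM wJ_val (hX_succ (lt_xN := lt_xN)) ?inE // wT_val; case_ifs; lia.
Qed.

Lemma ldes_wT : ldes wT = Tset N.
Proof.
by apply/setP => k; rewrite ldesE !wT_val low_val high_val !inE; have := ltn_ord k; lia.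
Qed.

Lemma rdes_wT : rdes wT = Tset N.
Proof.
apply/setP => k; have [p [q [+ + ->]]] := rdes_preim wT k.
by rewrite !wT_val inE; have := ltn_ord p; lia.
Qed.

Section JsetCase.
Hypothesis N_gt0 : 0 < N.

Lemma hJ_val (x : 'I_N.+1) :
  hX (Jset N) x = (if (x : nat) == 0 then 0 else if x < N then x.+1 else 1)%N :> nat.
Proof.
have [x0|x_gt0] := posnP x.
  have := @hX_le (Jset N) (Ordinal N_gt0); rewrite inE /= => /(_ isT).
  by rewrite (_ : low _ = x); [lia | apply: ord_inj; rewrite x0].
case: (ltnP x N) => [lt_xN|le_Nx].
  by rewrite (hX_succ (lt_xN := lt_xN)) ?inE //=; lia.
have -> : x = ord_max by apply: ord_inj; have := ltn_ord x; rewrite /=; lia.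
by rewrite (@hX_ord_max _ (Ordinal N_gt0)) ?inE // => k; rewrite inE.
Qed.

Lemma hI_val (x : 'I_N.+1) : x.+1 < N -> hX (Iset N) x = x.+1 :> nat.
Proof.
move=> lt_x1N; have lt_xN : x < N by lia.
by rewrite (hX_succ (lt_xN := lt_xN)) // inE.
Qed.

Lemma hI_max : hX (Iset N) ord_max = ord_max.
Proof.
have lt_N1 : N.-1 < N by lia.
apply: ord_inj; rewrite (@hX_ord_max _ (Ordinal lt_N1)) ?inE ?high_val /=; try lia.
by move=> k; have := ltn_ord k; lia.
Qed.

Lemma wI_hJ_val (x : 'I_N.+1) : (wI * hX (Jset N)) x =
  (if x.+1 < N then N - x else if (x : nat) == N.-1 then 0 else 1)%N :> nat.
Proof. by rewrite permM hJ_val wI_val; have := ltn_ord x; case_ifs; lia. Qed.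

(* h_I is only evaluated away from N-1. *)
Lemma wI_hJ : wI * hX (Jset N) = hX (Iset N) * wJ.
Proof.
apply: (@perm_eq_off _ _ (inord N.-1)) => x x_ne; apply: ord_inj.
rewrite wI_hJ_val permM wJ_val; case: (ltnP x.+1 N) => [lt_x1N|le_Nx1].
  by rewrite hI_val //; case_ifs; lia.
have -> : x = ord_max.
  by apply: ord_inj; move: x_ne; rewrite -val_eqE /= inordK; have := ltn_ord x; lia.
by rewrite hI_max /=; case_ifs; lia.
Qed.

Lemma ldes_wI_hJ : ldes (wI * hX (Jset N)) = Iset N.
Proof.
apply/setP => k; rewrite ldesE !wI_hJ_val low_val high_val inE.
by have := ltn_ord k; case_ifs; lia.
Qed.

Lemma rdes_wI_hJ : rdes (wI * hX (Jset N)) = Jset N.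
Proof.
apply/setP => k; have [p [q [+ + ->]]] := rdes_preim (wI * hX (Jset N)) k.
by rewrite !wI_hJ_val inE; have := ltn_ord p; have := ltn_ord q; case_ifs; lia.
Qed.

End JsetCase.

Lemma wI_hX (X : {set 'I_N}) : Jset N \subset X -> wI * hX X = hX (conjT X) * wJ.
Proof.
case/Jset_subset_cases => [->|[-> N_gt0]]; first by rewrite conjT_Tset wI_hT hT_wJ.
by rewrite conjT_Jset wI_hJ.
Qed.

Lemma rdes_wI_hX (X : {set 'I_N}) : Jset N \subset X -> rdes (wI * hX X) = X.
Proof.
case/Jset_subset_cases => [->|[-> N_gt0]]; first by rewrite wI_hT rdes_wT.
exact: rdes_wI_hJ.
Qed.

Lemma ldes_hX_wJ (X : {set 'I_N}) : Jset N \subset X -> ldes (hX (conjT X) * wJ) = conjT X.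
Proof.
case/Jset_subset_cases => [->|[-> N_gt0]]; first by rewrite conjT_Tset hT_wJ ldes_wT.
by rewrite conjT_Jset -wI_hJ // ldes_wI_hJ.
Qed.

End SymmetricGroup.

Unset Implicit Arguments.

Theorem lemma10p5 (N : nat) (X : {set 'I_N}) :
  (Jset N \subset X <-> Jset N \subset rdes (wlong (Iset N) * hX X))
  /\ (Jset N \subset X ->
      [/\ len (wlong (Iset N) * hX X) = (len (wlong (Iset N)) + len (hX X))%N,
          exists Y : {set 'I_N},
            [/\ wlong (Iset N) * hX X = hX Y * wlong (Jset N),
                (forall Y' : {set 'I_N},
                   wlong (Iset N) * hX X = hX Y' * wlong (Jset N) -> Y' = Y),
                Y = conjT X
              & ldes (hX Y * wlong (Jset N)) = Y]
        & rdes (wlong (Iset N) * hX X) = X]).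
Proof.
split; first by split => [JX|]; [rewrite rdes_wI_hX | exact: Jset_subset_of_rdes].
move=> JX; split; [exact: len_wI_hX | exists (conjT X); split | exact: rdes_wI_hX] => //.
- exact: wI_hX.
- move=> Y' eq_Y'; apply: hX_inj; apply: (mulIg (wlong (Jset N))).
  by rewrite -eq_Y' wI_hX.
- exact: ldes_hX_wJ.
Qed.
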